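(* Let $A(x_1,x_2)=\begin{bmatrix}sx_1 & x_2\\ mx_1+nx_2 & -sx_1\end{bmatrix}$, $P(x_1,x_2,x_3,x_4)=\begin{bmatrix}tA(x_1,x_2) & A(x_3,x_4)\\ pA(x_1,x_2)+qA(x_3,x_4) & -tA(x_1,x_2)\end{bmatrix}$, and $f=\det P$, with $(m,n,p,q,s,t)=(-1,-4,1,-1,1,1)$. Then the quartic diophantine equation $f(x_1,x_2,x_3,x_4)=1$ has infinitely many solutions in positive integers (one of them being $(21,8,33,13)$). *)

From HB Require Import structures.
From mathcomp Require Import all_boot all_order all_algebra.
Set Implicit Arguments. Unset Strict Implicit. Unset Printing Implicit Defensive.
Import Order.TTheory GRing.Theory Num.Theory.
Local Open Scope ring_scope.

Definition Amx (m n s : int) (x1 x2 : int) : 'M[int]_2 :=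
  \matrix_(i < 2, j < 2)
    if i == 0 :> nat then (if j == 0 :> nat then s * x1 else x2)
    else (if j == 0 :> nat then m * x1 + n * x2 else - (s * x1)).

Definition Pmx (m n p q s t : int) (x1 x2 x3 x4 : int) : 'M[int]_(2 + 2) :=
  let A12 := Amx m n s x1 x2 in
  let A34 := Amx m n s x3 x4 in
  block_mx (t *: A12) A34 (p *: A12 + q *: A34) (- (t *: A12)).

Definition fpoly (m n p q s t : int) (x1 x2 x3 x4 : int) : int :=
  \det (Pmx m n p q s t x1 x2 x3 x4).

Definition f13 (x1 x2 x3 x4 : int) : int := fpoly (-1) (-4) 1 (-1) 1 1 x1 x2 x3 x4.

Definition is_pos_sol (x : int * int * int * int) : Prop :=
  let '(x1, x2, x3, x4) := x in
  [/\ 0 < x1, 0 < x2, 0 < x3 & 0 < x4] /\ f13 x1 x2 x3 x4 = 1.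

From mathcomp Require Import all_boot all_order all_algebra ring zify.
Import Order.TTheory GRing.Theory Num.Theory.
Local Open Scope ring_scope.

(* Write u = (x1,x2), v = (x3,x4) and let
   Q(a,b) = a^2 - a b - 4 b^2 (the binary form with s = 1, m = -1, n = -4).
   Expanding the 4x4 determinant shows that f13 only depends on the three
   values Q(u), Q(v) and the polar form Q(u+v) - Q(u) - Q(v)
   ([f13_forms]).  Hence every linear map of Z^2 preserving Q, applied
   simultaneously to u and v, preserves f13 ([f13_linear_invariant]).
   The matrix [[2705, 4224], [1056, 1649]] is such an automorph of Q; it maps
   positive vectors to positive vectors and strictly increases the first
   coordinate.  Iterating it on the solution (21,8,33,13) yields positive
   solutions with unbounded first coordinate ([orbit_pos_sol],
   [orbit_grows]), and a family with unbounded first coordinate cannot be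
   listed by a finite sequence ([unbounded_not_finite]). *)

Lemma det4 (R : comPzRingType) (g : nat -> nat -> R) :
  \det (\matrix_(i < 4, j < 4) g i j) =
  0 + g 0%N 0%N*g 1%N 1%N*g 2%N 2%N*g 3%N 3%N
  - g 0%N 0%N*g 1%N 1%N*g 2%N 3%N*g 3%N 2%N
  - g 0%N 0%N*g 1%N 2%N*g 2%N 1%N*g 3%N 3%N
  + g 0%N 0%N*g 1%N 2%N*g 2%N 3%N*g 3%N 1%N
  + g 0%N 0%N*g 1%N 3%N*g 2%N 1%N*g 3%N 2%N
  - g 0%N 0%N*g 1%N 3%N*g 2%N 2%N*g 3%N 1%N
  - g 0%N 1%N*g 1%N 0%N*g 2%N 2%N*g 3%N 3%N
  + g 0%N 1%N*g 1%N 0%N*g 2%N 3%N*g 3%N 2%N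
  + g 0%N 1%N*g 1%N 2%N*g 2%N 0%N*g 3%N 3%N
  - g 0%N 1%N*g 1%N 2%N*g 2%N 3%N*g 3%N 0%N
  - g 0%N 1%N*g 1%N 3%N*g 2%N 0%N*g 3%N 2%N
  + g 0%N 1%N*g 1%N 3%N*g 2%N 2%N*g 3%N 0%N
  + g 0%N 2%N*g 1%N 0%N*g 2%N 1%N*g 3%N 3%N
  - g 0%N 2%N*g 1%N 0%N*g 2%N 3%N*g 3%N 1%N
  - g 0%N 2%N*g 1%N 1%N*g 2%N 0%N*g 3%N 3%N
  + g 0%N 2%N*g 1%N 1%N*g 2%N 3%N*g 3%N 0%N
  + g 0%N 2%N*g 1%N 3%N*g 2%N 0%N*g 3%N 1%N
  - g 0%N 2%N*g 1%N 3%N*g 2%N 1%N*g 3%N 0%N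
  - g 0%N 3%N*g 1%N 0%N*g 2%N 1%N*g 3%N 2%N
  + g 0%N 3%N*g 1%N 0%N*g 2%N 2%N*g 3%N 1%N
  + g 0%N 3%N*g 1%N 1%N*g 2%N 0%N*g 3%N 2%N
  - g 0%N 3%N*g 1%N 1%N*g 2%N 2%N*g 3%N 0%N
  - g 0%N 3%N*g 1%N 2%N*g 2%N 0%N*g 3%N 1%N
  + g 0%N 3%N*g 1%N 2%N*g 2%N 1%N*g 3%N 0%N.
Proof.
rewrite (expand_det_row _ ord0) !big_ord_recl big_ord0 /cofactor.
do 2![rewrite !(expand_det_row _ ord0) !big_ord_recl !big_ord0 /cofactor].
by rewrite !det_mx11 !mxE /= /bump /=; ring.
Qed.

(* The binary form Q(a,b) = a^2 - a b - 4 b^2, i.e. -det A(a,b) for our parameters. *)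
Definition Q (a b : int) : int := a ^+ 2 - a * b - 4 * b ^+ 2.

Definition Fq (N1 N2 D : int) : int :=
  N1 ^+ 2 + 3 * N1 * N2 + N2 ^+ 2 - D ^+ 2 + D * N1 - D * N2.

Lemma f13_forms (a b c d : int) :
  f13 a b c d = Fq (Q a b) (Q c d) (Q (a + c) (b + d) - Q a b - Q c d).
Proof.
rewrite /f13 /fpoly; set M := Pmx _ _ _ _ _ _ _ _ _ _.
pose g (i j : nat) := M (@inord 3 i) (@inord 3 j).
have -> : M = \matrix_(i < 4, j < 4) g i j.
  by apply/matrixP => i j; rewrite [RHS]mxE /g !inord_val.
have e0 : (@inord 3 0 : 'I_(2 + 2)) = lshift 2 (0 : 'I_2).
  by apply: val_inj; rewrite /= inordK.
have e1 : (@inord 3 1 : 'I_(2 + 2)) = lshift 2 (1 : 'I_2).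
  by apply: val_inj; rewrite /= inordK.
have e2 : (@inord 3 2 : 'I_(2 + 2)) = rshift 2 (0 : 'I_2).
  by apply: val_inj; rewrite /= inordK.
have e3 : (@inord 3 3 : 'I_(2 + 2)) = rshift 2 (1 : 'I_2).
  by apply: val_inj; rewrite /= inordK.
rewrite det4 /g /M /Pmx e0 e1 e2 e3.
rewrite !block_mxEul !block_mxEur !block_mxEdl !block_mxEdr /Amx !mxE /=.
by rewrite /Fq /Q; ring.
Qed.

(* A linear automorph (k l; k' l') of Q, applied to both (a,b) and (c,d),
   leaves f13 unchanged: it preserves Q(u), Q(v) and, by linearity, Q(u+v). *)
Lemma f13_linear_invariant (k l k' l' a b c d : int) :
  (forall x y, Q (k * x + l * y) (k' * x + l' * y) = Q x y) ->
  f13 (k * a + l * b) (k' * a + l' * b) (k * c + l * d) (k' * c + l' * d)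
  = f13 a b c d.
Proof.
move=> autQ; rewrite !f13_forms.
have lin1 : k * a + l * b + (k * c + l * d) = k * (a + c) + l * (b + d) by ring.
have lin2 : k' * a + l' * b + (k' * c + l' * d) = k' * (a + c) + l' * (b + d).
  by ring.
by rewrite lin1 lin2 !autQ.
Qed.

Definition step (x : int * int * int * int) : int * int * int * int :=
  let '(a, b, c, d) := x in
  (2705 * a + 4224 * b, 1056 * a + 1649 * b,
   2705 * c + 4224 * d, 1056 * c + 1649 * d).

Lemma Q_step (x y : int) : Q (2705 * x + 4224 * y) (1056 * x + 1649 * y) = Q x y.
Proof. by rewrite /Q; ring. Qed.

Lemma step_pos_sol x : is_pos_sol x -> is_pos_sol (step x).
Proof.
case: x => [[[a b] c] d] [[ha hb hc hd] hf]; split; first by split; lia.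
by rewrite f13_linear_invariant //; exact: Q_step.
Qed.

Definition orbit (k : nat) : int * int * int * int := iter k step (21, 8, 33, 13).

Lemma base_pos_sol : is_pos_sol (21, 8, 33, 13).
Proof. by split; rewrite ?f13_forms. Qed.

Lemma orbit_pos_sol k : is_pos_sol (orbit k).
Proof. by elim: k => [|k IHk]; [exact: base_pos_sol | exact: step_pos_sol]. Qed.

Lemma orbit_grows k : k%:Z < (orbit k).1.1.1.
Proof.
elim: k => [|k IHk] //; have := orbit_pos_sol k; rewrite /= -/(orbit k).
by case: (orbit k) IHk => [[[a b] c] d] /= IHk [[ha hb _ _] _]; lia.
Qed.

Lemma unbounded_not_finite (T : eqType) (P : T -> Prop) (h : T -> int) :
  (forall k : nat, exists2 x, P x & k%:Z < h x) ->
  ~ exists s : seq T, forall x, P x -> x \in s.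
Proof.
move=> unbounded [s sP]; pose K := (\max_(y <- s) `|h y|)%N.
have [x /sP xs hx] := unbounded K.
have := @leq_bigmax_seq _ s xpredT (fun y => `|h y|%N) _ xs isT.
by rewrite -/K; lia.
Qed.

Theorem mainTheorem13 :
  is_pos_sol (21, 8, 33, 13) /\
  ~ (exists s : seq (int * int * int * int),
       forall x, is_pos_sol x -> x \in s).
Proof.
split; first exact: base_pos_sol.
apply: (@unbounded_not_finite _ _ (fun x => x.1.1.1)) => k.
by exists (orbit k); [exact: orbit_pos_sol | exact: orbit_grows].
Qed.
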